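(* Let $D,\chi,\varepsilon>0$, $a\ge 0$, $\beta\ge 0$, $b=D\beta^2$. Then there are no $0<r_0<r_1$ and functions $\rho\in C^0[0,\infty)$, $\phi\in C^2[0,\infty)$ with $\rho\ge0$, $\phi(0)\ge0$, such that $\rho\equiv 0$ on $[0,r_0]\cup[r_1,\infty)$, $\rho>0$ on $(r_0,r_1)$, $\rho$ is symmetric about $(r_0+r_1)/2$ on $(r_0,r_1)$ (i.e. $\rho(r_0+s)=\rho(r_1-s)$ for $s\in(0,r_1-r_0)$), $\rho$ is differentiable on $(r_0,r_1)$ with $\varepsilon\rho\rho_r=\chi\rho\phi_r$ there, and $D\phi_{rr}+D\frac{\phi_r}{r}+a\rho-b\phi=0$ on $(0,\infty)$.
   Context: The system $\partial_r(\frac{\varepsilon}{2}\rho^2)=\chi\rho\phi_r$, $D\phi_{rr}+D\phi_r/r+a\rho-b\phi=0$ is the radially symmetric stationary form of a hyperbolic-parabolic chemotaxis model on $\mathbb{R}^2$ with pressure $p(\rho)=\frac{\varepsilon}{2}\rho^2$; $r=|x|$. *)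

From Stdlib Require Import Reals.
From Coquelicot Require Import Coquelicot.
Open Scope R_scope.

Definition cont_on_halfline (f : R -> R) : Prop :=
  (forall r, 0 < r -> continuous f r) /\
  filterlim f (at_right 0) (locally (f 0)).

(* f is C^2 on [0, +oo) with first and second derivatives df, ddf:
   derivatives on (0,+oo), and f, df, ddf continuous on [0,+oo)
   (this forces df(0), ddf(0) to be the one-sided derivatives at 0). *)
Definition C2_on_halfline (f df ddf : R -> R) : Prop :=
  (forall r, 0 < r -> is_derive f r (df r)) /\
  (forall r, 0 < r -> is_derive df r (ddf r)) /\
  cont_on_halfline f /\ cont_on_halfline df /\ cont_on_halfline ddf.

From Stdlib Require Import Reals Lra.
From Coquelicot Require Import Coquelicot.
Open Scope R_scope.

(* On the support (r0, r1) the balance law eps rho' = chi phi' (where rho > 0)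
   transfers the symmetry of rho about the midpoint to phi: phi is even, phi'
   odd and phi'' even under r |-> r0 + r1 - r.  Comparing the phi-equation at
   r and at r0 + r1 - r, everything cancels except
   D phi'(r) (1/r + 1/(r0 + r1 - r)) = 0, so phi' = 0 and hence rho' = 0 on the
   support.  Then rho is a positive constant on (r0, r1), which contradicts its
   continuity at r0, where it vanishes. *)

Lemma locally_open_interval (a b x : R) :
  a < x < b -> locally x (fun t => a < t < b).
Proof.
  intros Hx. apply (locally_interval _ x a b); simpl; try lra.
  intros t Hat Htb. simpl in *. lra.
Qed.

Lemma is_derive_zero_const (f : R -> R) (a b : R) :
  (forall x, a < x < b -> is_derive f x 0) ->
  forall x y, a < x < b -> a < y < b -> f x = f y.
Proof.
  intros Hd x y Hx Hy.
  assert (Hxy : forall z, Rmin x y <= z <= Rmax x y -> a < z < b).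
  { intros z. unfold Rmin, Rmax. destruct (Rle_dec x y); lra. }
  destruct (MVT_gen f x y (fun _ => 0)) as [c [_ Hc]].
  - intros z Hz. apply Hd, Hxy. lra.
  - intros z Hz. apply continuity_pt_filterlim, (ex_derive_continuous f z).
    exists 0. apply Hd, Hxy, Hz.
  - lra.
Qed.

Lemma is_derive_reflect (f : R -> R) (c x l : R) :
  is_derive f (c - x) l -> is_derive (fun t => f (c - t)) x (- l).
Proof.
  intros Hf.
  assert (Hc : is_derive (fun t => c - t) x (-1)) by (auto_derive; auto; ring).
  replace (- l) with (scal (-1) l) by (unfold scal; simpl; unfold mult; simpl; ring).
  exact (is_derive_comp f (fun t => c - t) x l (-1) Hf Hc).
Qed.

Lemma is_derive_reflect_scal (f df : R -> R) (a b s : R) :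
  (forall x, a < x < b -> is_derive f x (df x)) ->
  (forall x, a < x < b -> f (a + b - x) = s * f x) ->
  forall x, a < x < b -> df (a + b - x) = - s * df x.
Proof.
  intros Hd Hs x Hx.
  assert (Hl : is_derive (fun t => f (a + b - t)) x (- df (a + b - x))).
  { apply is_derive_reflect, Hd. lra. }
  assert (Hr : is_derive (fun t => f (a + b - t)) x (s * df x)).
  { apply (is_derive_ext_loc (fun t => s * f t)).
    - apply (filter_imp (fun t => a < t < b)); [|now apply locally_open_interval].
      intros t Ht. symmetry. now apply Hs.
    - apply is_derive_scal, Hd, Hx. }
  pose proof (is_derive_unique _ _ _ Hl) as El.
  pose proof (is_derive_unique _ _ _ Hr) as Er.
  lra.
Qed.

Lemma continuous_const_on_right (f : R -> R) (a b c : R) :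
  a < b -> continuous f a -> (forall x, a < x < b -> f x = c) -> f a = c.
Proof.
  intros Hab Hf Hc.
  apply (filterlim_locally_unique (F := at_right a) f).
  - exact (filterlim_filter_le_1 f (filter_le_within _) Hf).
  - apply (filterlim_ext_loc (fun _ => c)); [|apply filterlim_const].
    exists (mkposreal _ (proj2 (Rlt_0_minus a b) Hab)). intros t Ht Hat.
    change (Rabs (t - a) < b - a) in Ht. apply Rabs_def2 in Ht.
    symmetry. apply Hc. lra.
Qed.

Section Symmetric_support.

Variables (D chi eps a b r0 r1 : R) (rho drho phi dphi ddphi : R -> R).

Hypothesis D_pos : 0 < D.
Hypothesis chi_pos : 0 < chi.
Hypothesis eps_pos : 0 < eps.
Hypothesis r0_pos : 0 < r0.
Hypothesis rho_pos : forall r, r0 < r < r1 -> 0 < rho r.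
Hypothesis rho_sym : forall r, r0 < r < r1 -> rho (r0 + r1 - r) = rho r.
Hypothesis rho_derive : forall r, r0 < r < r1 -> is_derive rho r (drho r).
Hypothesis phi_derive : forall r, 0 < r -> is_derive phi r (dphi r).
Hypothesis dphi_derive : forall r, 0 < r -> is_derive dphi r (ddphi r).
Hypothesis balance :
  forall r, r0 < r < r1 -> eps * rho r * drho r = chi * rho r * dphi r.
Hypothesis phi_eq :
  forall r, 0 < r -> D * ddphi r + D * dphi r / r + a * rho r - b * phi r = 0.

Lemma dphi_balance r : r0 < r < r1 -> chi * dphi r = eps * drho r.
Proof.
  intros Hr. apply (Rmult_eq_reg_l (rho r)); [|apply Rgt_not_eq, rho_pos, Hr].
  rewrite <- !Rmult_assoc, (Rmult_comm (rho r) chi), (Rmult_comm (rho r) eps).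
  symmetry. apply balance, Hr.
Qed.

Lemma phi_sym r : r0 < r < r1 -> phi (r0 + r1 - r) = phi r.
Proof.
  intros Hr.
  assert (Hconst : forall x y, r0 < x < r1 -> r0 < y < r1 ->
            eps * rho x - chi * phi x = eps * rho y - chi * phi y).
  { apply is_derive_zero_const. intros x Hx.
    replace 0 with (eps * drho x - chi * dphi x) by (rewrite dphi_balance; lra).
    apply (is_derive_minus (fun t => eps * rho t) (fun t => chi * phi t));
      apply is_derive_scal; [apply rho_derive | apply phi_derive]; lra. }
  pose proof (Hconst (r0 + r1 - r) r ltac:(lra) Hr) as E.
  rewrite rho_sym in E by exact Hr.
  apply (Rmult_eq_reg_l chi); lra.
Qed.

Lemma dphi_antisym r : r0 < r < r1 -> dphi (r0 + r1 - r) = - dphi r.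
Proof.
  intros Hr. rewrite (is_derive_reflect_scal phi dphi r0 r1 1); [ring | | | exact Hr].
  - intros x Hx. apply phi_derive. lra.
  - intros x Hx. rewrite Rmult_1_l. now apply phi_sym.
Qed.

Lemma ddphi_sym r : r0 < r < r1 -> ddphi (r0 + r1 - r) = ddphi r.
Proof.
  intros Hr. rewrite (is_derive_reflect_scal dphi ddphi r0 r1 (-1)); [ring | | | exact Hr].
  - intros x Hx. apply dphi_derive. lra.
  - intros x Hx. rewrite dphi_antisym by exact Hx. ring.
Qed.

Lemma dphi_zero r : r0 < r < r1 -> dphi r = 0.
Proof.
  intros Hr. set (r' := r0 + r1 - r).
  assert (Hr' : 0 < r') by (unfold r'; lra).
  pose proof (phi_eq r ltac:(lra)) as E.
  pose proof (phi_eq r' Hr') as E'.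
  unfold r' in E'. rewrite ddphi_sym, dphi_antisym, rho_sym, phi_sym in E' by exact Hr.
  fold r' in E'.
  assert (Hsum : D * dphi r * (/ r + / r') = 0) by (unfold Rdiv in E, E'; lra).
  assert (Hpos : 0 < / r + / r').
  { pose proof (Rinv_0_lt_compat r ltac:(lra)). pose proof (Rinv_0_lt_compat r' Hr'). lra. }
  apply Rmult_integral in Hsum as [Hsum | Hsum]; [|lra].
  apply Rmult_integral in Hsum as [Hsum | Hsum]; lra.
Qed.

Lemma rho_const x y : r0 < x < r1 -> r0 < y < r1 -> rho x = rho y.
Proof.
  apply is_derive_zero_const. intros r Hr.
  replace 0 with (drho r); [now apply rho_derive|].
  pose proof (dphi_balance r Hr) as E. rewrite dphi_zero in E by exact Hr.
  apply (Rmult_eq_reg_l eps); lra.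
Qed.

End Symmetric_support.

Theorem mainTheorem4 (D chi eps a beta : R) :
  0 < D -> 0 < chi -> 0 < eps -> 0 <= a -> 0 <= beta ->
  ~ (exists (r0 r1 : R) (rho phi dphi ddphi : R -> R),
        0 < r0 /\ r0 < r1 /\
        cont_on_halfline rho /\
        C2_on_halfline phi dphi ddphi /\
        (forall r, 0 <= r -> 0 <= rho r) /\
        0 <= phi 0 /\
        (forall r, 0 <= r <= r0 -> rho r = 0) /\
        (forall r, r1 <= r -> rho r = 0) /\
        (forall r, r0 < r < r1 -> 0 < rho r) /\
        (forall s, 0 < s < r1 - r0 -> rho (r0 + s) = rho (r1 - s)) /\
        (forall r, r0 < r < r1 ->
           ex_derive rho r /\ eps * rho r * Derive rho r = chi * rho r * dphi r) /\
        (forall r, 0 < r ->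
           D * ddphi r + D * dphi r / r + a * rho r - (D * beta ^ 2) * phi r = 0)).
Proof.
  intros HD Hchi Heps _ _
    (r0 & r1 & rho & phi & dphi & ddphi & Hr0 & Hr01 & [Hrho_cont _]
     & [Hphi [Hdphi _]] & _ & _ & Hrho_left & _ & Hrho_pos & Hrho_sym & Hbal & Hphi_eq).
  set (m := (r0 + r1) / 2).
  assert (Hm : r0 < m < r1) by (unfold m; lra).
  assert (Hsym : forall r, r0 < r < r1 -> rho (r0 + r1 - r) = rho r).
  { intros r Hr. replace (r0 + r1 - r) with (r1 - (r - r0)) by ring.
    rewrite <- Hrho_sym by lra. f_equal. ring. }
  assert (Hrho_const : forall x y, r0 < x < r1 -> r0 < y < r1 -> rho x = rho y).
  { apply (rho_const D chi eps a (D * beta ^ 2) r0 r1 rho (Derive rho) phi dphi ddphi);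
      try assumption.
    - intros r Hr. now apply Derive_correct, Hbal.
    - intros r Hr. apply Hbal, Hr. }
  assert (Hrho_at_r0 : rho r0 = rho m).
  { apply (continuous_const_on_right rho r0 r1); [lra | now apply Hrho_cont |].
    intros x Hx. now apply Hrho_const. }
  pose proof (Hrho_pos m Hm). rewrite Hrho_left in Hrho_at_r0; lra.
Qed.
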